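(* If $A_0\in G$ fixes $Q$, then $A_0$ leaves invariant the subgroup $H_Q\le H_\Gamma$ generated by the images of the elements of $\mathrm{supp}\,Q$.
   Context: $\Gamma$ is a finite simplicial graph with vertex set $X$, $|X|=2g$, $A_\Gamma$ its right-angled Artin group, $H_\Gamma$ its abelianization, $L=X\cup X^{-1}$, $\bar u\in X$ the vertex of $u\in L$; $\mathrm{lk}(v)$ = neighbours, $\mathrm{st}(v)=\mathrm{lk}(v)\cup\{v\}$; domination $v\ge w$ iff $\mathrm{lk}(w)\subset\mathrm{st}(v)$. Fix a bijection $u\mapsto u^*$ of $L$ with $(u^* )^*=u^{-1}$ and letters $a_1,\dots,a_g\in L$ whose vertices together with those of $a_1^*,\dots,a_g^*$ are all of $X$; $Q=\sum\{[a_i]\wedge[a_i^*]: \bar a_i^*\text{ adjacent to }\bar a_i\}\in\Lambda^2H_\Gamma$, assumed nonzero, with $\mathrm{Aut}\,H_\Gamma$ acting diagonally on $\Lambda^2 H_\Gamma$. $\mathrm{supp}\,Q$ is the set of vertices appearing in $Q$. For $a\in X$, $b\in\mathrm{supp}\,Q$ with $a\ge b$, $a\ne b$, $E_{a,b}\in\mathrm{Aut}\,H_\Gamma$ sends $[b]\mapsto[b]+[a]$ and fixes $[x]$ for $x\ne b$; $N_b$ sends $[b]\mapsto-[b]$ and fixes the other basis elements. $G$ is the subgroup of $\mathrm{Aut}\,H_\Gamma$ generated by these $E_{a,b}$ and the $N_b$, $b\in\mathrm{supp}\,Q$. *)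

From mathcomp Require Import all_boot all_order all_algebra.
Set Implicit Arguments. Unset Strict Implicit. Unset Printing Implicit Defensive.
Import GRing.Theory Num.Theory.
Local Open Scope ring_scope.

(* Vertex set X is modelled as 'I_n (with n = 2g imposed in the theorem).
   H_Gamma = Z^X is modelled as integer column vectors 'cV[int]_n, with
   basis vector [x] = basis x. *)

(* Letters L = X u X^{-1}: (x, false) is x, (x, true) is x^{-1}. *)
Definition letter (n : nat) := ('I_n * bool)%type.
Definition vert n (u : letter n) : 'I_n := u.1.
Definition linv n (u : letter n) : letter n := (u.1, ~~ u.2).

Definition basis n (x : 'I_n) : 'cV[int]_n := delta_mx x 0.
Definition lclass n (u : letter n) : 'cV[int]_n :=
  (-1) ^+ u.2 *: basis (vert u).

(* Lambda^2 H_Gamma modelled as alternating integer matrices: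
   x /\ y  |->  x y^T - y x^T ; the diagonal action of A is w |-> A w A^T,
   so that wact A (wedge x y) = wedge (A x) (A y). *)
Definition wedge n (x y : 'cV[int]_n) : 'M[int]_n := x *m y^T - y *m x^T.
Definition wact n (A w : 'M[int]_n) : 'M[int]_n := A *m w *m A^T.

(* Domination v >= w iff lk(w) is contained in st(v). *)
Definition dominates n (adj : rel 'I_n) (v w : 'I_n) : Prop :=
  forall x, adj w x -> x = v \/ adj v x.

Definition Qform n g (adj : rel 'I_n) (star : letter n -> letter n)
    (a : 'I_g -> letter n) : 'M[int]_n :=
  \sum_(i < g | adj (vert (a i)) (vert (star (a i))))
     wedge (lclass (a i)) (lclass (star (a i))).

Definition suppQ n g (adj : rel 'I_n) (star : letter n -> letter n)
    (a : 'I_g -> letter n) (x : 'I_n) : bool :=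
  [exists i : 'I_g, adj (vert (a i)) (vert (star (a i)))
                    && ((x == vert (a i)) || (x == vert (star (a i))))].

Definition Emx n (a b : 'I_n) : 'M[int]_n := 1%:M + delta_mx a b.
Definition Nmx n (b : 'I_n) : 'M[int]_n := 1%:M - 2%:R *: delta_mx b b.

Inductive Ggen n (adj : rel 'I_n) (S : 'I_n -> bool) : 'M[int]_n -> Prop :=
  | GgenE (a b : 'I_n) : S b -> dominates adj a b -> a != b -> Ggen adj S (Emx a b)
  | GgenN (b : 'I_n) : S b -> Ggen adj S (Nmx b).

Inductive inG n (adj : rel 'I_n) (S : 'I_n -> bool) : 'M[int]_n -> Prop :=
  | inG_gen M : Ggen adj S M -> inG adj S M
  | inG_one : inG adj S 1%:M
  | inG_mul A B : inG adj S A -> inG adj S B -> inG adj S (A *m B)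
  | inG_inv A : inG adj S A -> inG adj S (invmx A).

Definition inHQ n (S : 'I_n -> bool) (v : 'cV[int]_n) : Prop :=
  exists c : 'I_n -> int, v = \sum_(b < n | S b) c b *: basis b.

From mathcomp Require Import all_boot all_order all_algebra ring.
Set Implicit Arguments. Unset Strict Implicit. Unset Printing Implicit Defensive.
Import GRing.Theory.
Local Open Scope ring_scope.

(* Viewed as a linear map H_Gamma^* -> H_Gamma, the alternating form Q has
   image exactly H_Q: it sends the dual basis vector of [star (a i)] to
   +-[a i] and that of [a i] to -+[star (a i)], and kills the rest.  Every
   element of G is invertible, and an invertible A0 with A0 Q A0^T = Q
   satisfies A0 Q = Q (A0^T)^-1, so it maps the image of Q into itself. *)

Lemma congruence_fixed_mulmx (R : comUnitRingType) m (A Q : 'M[R]_m) :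
  A \in unitmx -> A *m Q *m A^T = Q -> A *m Q = Q *m invmx A^T.
Proof. by move=> A_unit fixQ; rewrite -{2}fixQ mulmxK // unitmx_tr. Qed.

Lemma Emx_unitmx n (x y : 'I_n) : x != y -> Emx x y \in unitmx.
Proof.
move=> neq_xy; apply: (proj1 (@mulmx1_unit _ _ _ (1%:M - delta_mx x y) _)).
rewrite /Emx mulmxDl mul1mx mulmxBr mulmx1 mul_delta_mx_cond eq_sym (negbTE neq_xy).
by rewrite mulr0n subr0 subrK.
Qed.

Lemma Nmx_involutive n (b : 'I_n) : Nmx b *m Nmx b = 1%:M.
Proof.
rewrite /Nmx mulmxBl mul1mx mulmxBr mulmx1 -!scalemxAl -!scalemxAr.
rewrite mul_delta_mx_cond eqxx mulr1n scalerA; apply/matrixP => i j; rewrite !mxE.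
by case: (_ && _) => /=; ring.
Qed.

Lemma inG_unitmx n adj S (A : 'M[int]_n) : inG adj S A -> A \in unitmx.
Proof.
elim => [M [x y _ _ neq_xy | b _] | | A1 B _ A1_unit _ B_unit | A1 _ A1_unit].
- exact: Emx_unitmx.
- exact: (proj1 (mulmx1_unit (Nmx_involutive b))).
- exact: unitmx1.
- by rewrite unitmx_mul A1_unit B_unit.
- by rewrite unitmx_inv.
Qed.

Lemma mul_basis n m (M : 'M[int]_(m, n)) (k : 'I_n) : M *m basis k = col k M.
Proof.
apply/matrixP => x y; rewrite !mxE (bigD1 k) //= big1 ?addr0.
  by rewrite /basis mxE eqxx (ord1 y) eqxx mulr1.
by move=> j neq_jk; rewrite /basis mxE (negbTE neq_jk) mulr0.
Qed.

Lemma inHQP n (S : 'I_n -> bool) (v : 'cV[int]_n) :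
  inHQ S v <-> forall x, ~~ S x -> v x 0 = 0.
Proof.
have basis0 x b : ~~ S x -> S b -> basis b x 0 = 0.
  by rewrite /basis mxE; case: eqP => [-> /negP//|]; rewrite andbT.
split=> [[c ->] x Sx | v0].
  by rewrite summxE big1 // => b Sb; rewrite mxE basis0 ?mulr0.
exists (fun b => v b 0); apply/matrixP => x y; rewrite (ord1 y) summxE.
have [Sx | Sx] := boolP (S x); last first.
  by rewrite v0 // big1 // => b Sb; rewrite mxE basis0 ?mulr0.
rewrite (bigD1 x) //= big1 ?addr0; first by rewrite /basis !mxE !eqxx mulr1.
by move=> b /andP[_ neq_bx]; rewrite /basis !mxE eq_sym (negbTE neq_bx) mulr0.
Qed.

Lemma inHQ_mulmx n (S : 'I_n -> bool) (A : 'M[int]_n) (v : 'cV[int]_n) :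
  (forall b, S b -> inHQ S (A *m basis b)) -> inHQ S v -> inHQ S (A *m v).
Proof.
move=> A_basis [c ->]; apply/inHQP => x Sx.
rewrite mulmx_sumr summxE big1 // => b Sb.
by rewrite -scalemxAr mxE (proj1 (inHQP _ _) (A_basis b Sb) x Sx) mulr0.
Qed.

Definition endpoint n g (star : letter n -> letter n) (a : 'I_g -> letter n)
  (t : 'I_g + 'I_g) : 'I_n :=
  match t with inl i => vert (a i) | inr i => vert (star (a i)) end.

(* The 2g endpoints cover the 2g vertices, hence are pairwise distinct. *)
Lemma endpoint_inj n g star (a : 'I_g -> letter n) : n = (2 * g)%N ->
  (forall x : 'I_n, exists i, x = vert (a i) \/ x = vert (star (a i))) ->
  injective (endpoint star a).
Proof.
move=> hn cover x y; apply: (@image_injP _ _ _ predT _ _) => //.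
have -> : #|[seq endpoint star a t | t in predT]| = #|'I_n|.
  apply: eq_card => z; rewrite !inE; apply/mapP.
  by have [i [->|->]] := cover z; [exists (inl i) | exists (inr i)];
    rewrite ?mem_enum.
by rewrite card_ord cardT -cardE card_sum card_ord hn mul2n addnn.
Qed.

Section QformImage.
Variables (n g : nat) (adj : rel 'I_n) (star : letter n -> letter n).
Variable a : 'I_g -> letter n.
Hypothesis endpoint_inj : injective (endpoint star a).

Local Notation va i := (vert (a i)).
Local Notation vs i := (vert (star (a i))).
Local Notation Q := (Qform adj star a).
Local Notation edge i := (adj (va i) (vs i)).

Definition pair_sign i : int := (-1) ^+ (a i).2 * (-1) ^+ (star (a i)).2.

Lemma pair_sign_sq i : pair_sign i * pair_sign i = 1.
Proof. by rewrite /pair_sign; case: (a i).2; case: (star _).2; ring. Qed.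

Lemma va_vs_neq j i : (va j == vs i) = false.
Proof. by apply/eqP => /(@endpoint_inj (inl j) (inr i)). Qed.

Lemma va_eq j i : (va j == va i) = (j == i).
Proof. by apply/eqP/eqP => [/(@endpoint_inj (inl j) (inl i)) [] | ->]. Qed.

Lemma vs_eq j i : (vs j == vs i) = (j == i).
Proof. by apply/eqP/eqP => [/(@endpoint_inj (inr j) (inr i)) [] | ->]. Qed.

Lemma QformE x k :
  Q x k = \sum_(j < g | edge j) pair_sign j *
    ((x == va j)%:R * (k == vs j)%:R - (x == vs j)%:R * (k == va j)%:R).
Proof.
rewrite /Qform summxE; apply: eq_bigr => j _.
by rewrite /wedge /pair_sign !mxE !big_ord1 !mxE !eqxx !andbT; ring.
Qed.

Lemma Qform_mul_basis_vs i : edge i -> Q *m basis (vs i) = pair_sign i *: basis (va i).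
Proof.
move=> edge_i; apply/matrixP => x y; rewrite mul_basis (ord1 y) !mxE QformE.
rewrite (bigD1 i) //= big1 ?addr0.
  by rewrite eqxx [vs _ == va _]eq_sym va_vs_neq andbT mulr0 subr0 mulr1.
move=> j /andP[_ neq_ji].
rewrite vs_eq [vs _ == va _]eq_sym va_vs_neq [i == j]eq_sym (negbTE neq_ji).
by rewrite !(mulr0, subrr).
Qed.

Lemma Qform_mul_basis_va i : edge i -> Q *m basis (va i) = - pair_sign i *: basis (vs i).
Proof.
move=> edge_i; apply/matrixP => x y; rewrite mul_basis (ord1 y) !mxE QformE.
rewrite (bigD1 i) //= big1 ?addr0.
  by rewrite eqxx va_vs_neq andbT mulr0 sub0r mulr1 mulNr mulrN.
move=> j /andP[_ neq_ji]; rewrite va_eq va_vs_neq [i == j]eq_sym (negbTE neq_ji).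
by rewrite !(mulr0, subrr).
Qed.

Lemma basis_in_Qform_range b : suppQ adj star a b -> exists w, Q *m w = basis b.
Proof.
case/existsP => i /andP[edge_i /orP[] /eqP ->].
  exists (pair_sign i *: basis (vs i)).
  by rewrite -scalemxAr Qform_mul_basis_vs // scalerA pair_sign_sq scale1r.
exists (- pair_sign i *: basis (va i)).
by rewrite -scalemxAr Qform_mul_basis_va // scalerA mulrNN pair_sign_sq scale1r.
Qed.

Lemma Qform_range_inHQ w : inHQ (suppQ adj star a) (Q *m w).
Proof.
apply/inHQP => x Sx; rewrite mxE big1 // => k _.
rewrite QformE big1 ?mul0r // => j edge_j.
suff [-> ->] : (x == va j) = false /\ (x == vs j) = false by rewrite !mul0r subrr mulr0.
by split; apply/negbTE/eqP => e; move/negP: Sx; apply; apply/existsP; exists j;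
  rewrite edge_j e eqxx ?orbT.
Qed.

End QformImage.

Theorem lemma4p5 (n g : nat) (hn : n = (2 * g)%N)
  (adj : rel 'I_n) (adj_sym : symmetric adj) (adj_irr : irreflexive adj)
  (star : letter n -> letter n) (star_bij : bijective star)
  (star_inv : forall u, star (star u) = linv u)
  (a : 'I_g -> letter n)
  (a_cover : forall x : 'I_n,
      exists i : 'I_g, x = vert (a i) \/ x = vert (star (a i)))
  (Q_nz : Qform adj star a != 0)
  (A0 : 'M[int]_n) (A0_G : inG adj (suppQ adj star a) A0)
  (A0_fix : wact A0 (Qform adj star a) = Qform adj star a) :
  forall v : 'cV[int]_n,
    inHQ (suppQ adj star a) v -> inHQ (suppQ adj star a) (A0 *m v).
Proof.
have inj := endpoint_inj hn a_cover.
have A0Q := congruence_fixed_mulmx (inG_unitmx A0_G) A0_fix.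
move=> v; apply: inHQ_mulmx => b /(basis_in_Qform_range inj) [w <-].
by rewrite mulmxA A0Q -mulmxA; apply: Qform_range_inHQ.
Qed.
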